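(* Let $I$ be a set and $P_i$ ($i\in I$) pastures, and let $\bigotimes_{i\in I}P_i$ and $i_j:P_j\to\bigotimes_{i\in I}P_i$ be as described in the context. Then $\bigotimes_{i\in I}P_i$ is a pasture, and for each $j\in I$ the map $i_j$ is a morphism of pastures.
   Context: A pasture is a multiplicative monoid $P$ with a zero element $0$ (absorbing) such that $P^\times=P\setminus\{0\}$ is an abelian group, together with an involution $x\mapsto -x$ fixing $0$, and a subset $N_P\subseteq P^3$ (write $a+b+c=0$ for $(a,b,c)\in N_P$) such that: (1) $N_P$ is invariant under permutations; (2) if $a+b+c=0$ then $da+db+dc=0$ for all $d\in P$; (3) $a+b+0=0$ iff $a=-b$. A morphism of pastures is a multiplicative map $f$ with $f(0)=0$, $f(1)=1$, $f(-a)=-f(a)$, preserving nullsets. The coproduct: let $\bigoplus_{i\in I}P_i^\times$ be the set of families $(x_i)_{i\in I}$ with $x_i\in P_i^\times$ and $x_i=1_i$ for all but finitely many $i$. Define $(x_i)\sim(y_i)$ iff there is a finite set of indices of even cardinality on which $x_i=-y_i$, with $x_i=y_i$ at all other indices (an equivalence relation). Set $\bigotimes_{i\in I}P_i=\{0\}\cup(\bigoplus_{i\in I}P_i^\times/\sim)$, classes written $[(x_i)_{i\in I}]$. Multiplication: $0$ absorbing, $[(x_i)][(y_i)]=[(x_iy_i)]$. Involution: $-0=0$ and $-[(x_i)]=[(y_i)]$ where $y_j=-x_j$ for one chosen index $j$ and $y_i=x_i$ for $i\neq j$. Nullset: for nonzero elements, $[(x_i)]+[(y_i)]+[(z_i)]=0$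 iff there are representatives $(x_i'),(y_i'),(z_i')$ of these classes and an index $j$ with $x'_j+y'_j+z'_j=0$ in $P_j$ and $x'_i=y'_i=z'_i$ for all $i\neq j$; relations involving $0$ are the permutations of $u+v+0=0$ iff $u=-v$. The maps: $i_j(0)=0$ and $i_j(x)=[(y_i)_{i\in I}]$ with $y_j=x$ and $y_i=1_i$ for $i\neq j$. *)

From Stdlib Require Import List Arith ClassicalEpsilon.
Import ListNotations.
Set Implicit Arguments.

(** Pasture axioms on raw data (carrier T, zero, one, multiplication,
    involution neg, nullset N : T -> T -> T -> Prop, where N a b c means
    a + b + c = 0). *)
Record pasture_axioms (T : Type) (zero one : T) (mul : T -> T -> T)
    (neg : T -> T) (N : T -> T -> T -> Prop) : Prop := {
  pa_mulA : forall x y z, mul x (mul y z) = mul (mul x y) z;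
  pa_mulC : forall x y, mul x y = mul y x;
  pa_mul1 : forall x, mul one x = x;
  pa_mul0 : forall x, mul zero x = zero;
  pa_one_neq0 : one <> zero;
  pa_mul_neq0 : forall x y, x <> zero -> y <> zero -> mul x y <> zero;
  pa_inv : forall x, x <> zero -> exists y, y <> zero /\ mul x y = one;
  pa_negK : forall x, neg (neg x) = x;
  pa_neg0 : neg zero = zero;
  pa_N_perm : forall a b c, N a b c ->
     N a c b /\ N b a c /\ N b c a /\ N c a b /\ N c b a;
  pa_N_mul : forall d a b c, N a b c -> N (mul d a) (mul d b) (mul d c);
  pa_N_zero : forall a b, N a b zero <-> a = neg b }.

Record pasture := Pasture {
  pcar :> Type;
  pzero : pcar;
  pone : pcar;
  pmul : pcar -> pcar -> pcar;
  pneg : pcar -> pcar;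
  pN : pcar -> pcar -> pcar -> Prop;
  pax : pasture_axioms pzero pone pmul pneg pN }.

Definition morphism_axioms (S T : Type)
    (z1 o1 : S) (m1 : S -> S -> S) (n1 : S -> S) (N1 : S -> S -> S -> Prop)
    (z2 o2 : T) (m2 : T -> T -> T) (n2 : T -> T) (N2 : T -> T -> T -> Prop)
    (f : S -> T) : Prop :=
  (forall x y, f (m1 x y) = m2 (f x) (f y)) /\
  f z1 = z2 /\ f o1 = o2 /\
  (forall a, f (n1 a) = n2 (f a)) /\
  (forall a b c, N1 a b c -> N2 (f a) (f b) (f c)).

Section Coprod.
Variable I : Type.
Variable P : I -> pasture.

Definition finsupp (x : forall i, pcar (P i)) : Prop :=
  exists l : list I, forall i, ~ In i l -> x i = pone (P i).

Definition Fam : Type :=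
  { x : forall i, pcar (P i) | (forall i, x i <> pzero (P i)) /\ finsupp x }.

Definition fam_equiv (x y : Fam) : Prop :=
  exists l : list I, NoDup l /\ Nat.even (length l) = true /\
    forall i, (In i l -> proj1_sig x i = pneg (P i) (proj1_sig y i)) /\
              (~ In i l -> proj1_sig x i = proj1_sig y i).

Definition cls (x : Fam) : Fam -> Prop := fun y => fam_equiv x y.

Definition Cls : Type := { C : Fam -> Prop | exists x, C = cls x }.

Definition class_of (x : Fam) : Cls := exist _ (cls x) (ex_intro _ x eq_refl).

Definition repr (C : Cls) : Fam :=
  proj1_sig (constructive_indefinite_description _ (proj2_sig C)).

(** the carrier: {0} together with the classes *)
Definition coprod : Type := option Cls.

Definition cp_zero : coprod := None.

Lemma fam_one_prop :
  (forall i, pone (P i) <> pzero (P i)) /\ finsupp (fun i => pone (P i)).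
Proof.
  split.
  - intro i; exact (pa_one_neq0 (pax (P i))).
  - exists nil; intros i _; reflexivity.
Qed.

Definition fam_one : Fam := exist _ (fun i => pone (P i)) fam_one_prop.

Definition cp_one : coprod := Some (class_of fam_one).

Lemma fam_mul_prop (x y : Fam) :
  (forall i, pmul (P i) (proj1_sig x i) (proj1_sig y i) <> pzero (P i)) /\
  finsupp (fun i => pmul (P i) (proj1_sig x i) (proj1_sig y i)).
Proof.
  destruct x as [x [hx [lx sx]]], y as [y [hy [ly sy]]]; simpl; split.
  - intro i; apply (pa_mul_neq0 (pax (P i))); auto.
  - exists (lx ++ ly); intros i hi.
    rewrite sx, sy.
    + apply (pa_mul1 (pax (P i))).
    + intro h; apply hi; apply in_or_app; right; exact h.
    + intro h; apply hi; apply in_or_app; left; exact h.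
Qed.

Definition fam_mul (x y : Fam) : Fam :=
  exist _ (fun i => pmul (P i) (proj1_sig x i) (proj1_sig y i)) (fam_mul_prop x y).

Definition cp_mul (a b : coprod) : coprod :=
  match a, b with
  | Some C, Some D => Some (class_of (fam_mul (repr C) (repr D)))
  | _, _ => None
  end.

Variable j0 : I. (* the chosen index used to define the involution *)

Definition flip_fun (x : Fam) : forall i, pcar (P i) :=
  fun i => if excluded_middle_informative (j0 = i)
           then pneg (P i) (proj1_sig x i) else proj1_sig x i.

Lemma fam_flip_prop (x : Fam) :
  (forall i, flip_fun x i <> pzero (P i)) /\ finsupp (flip_fun x).
Proof.
  destruct x as [x [hx [lx sx]]]; unfold flip_fun; simpl; split.
  - intro i; destruct (excluded_middle_informative (j0 = i)); auto.
    intro h; apply (hx i).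
    rewrite <- (pa_negK (pax (P i)) (x i)), h; apply (pa_neg0 (pax (P i))).
  - exists (j0 :: lx); intros i hi.
    destruct (excluded_middle_informative (j0 = i)) as [e|ne].
    + exfalso; apply hi; left; exact e.
    + apply sx; intro h; apply hi; right; exact h.
Qed.

Definition fam_flip (x : Fam) : Fam := exist _ (flip_fun x) (fam_flip_prop x).

Definition cp_neg (a : coprod) : coprod :=
  match a with
  | None => None
  | Some C => Some (class_of (fam_flip (repr C)))
  end.

Definition cp_N (a b c : coprod) : Prop :=
  match a, b, c with
  | Some A, Some B, Some C =>
      exists (x y z : Fam) (j : I),
        proj1_sig A x /\ proj1_sig B y /\ proj1_sig C z /\
        pN (P j) (proj1_sig x j) (proj1_sig y j) (proj1_sig z j) /\
        forall i, i <> j ->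
          proj1_sig x i = proj1_sig y i /\ proj1_sig y i = proj1_sig z i
  | _, _, _ =>
      (c = None /\ a = cp_neg b) \/ (b = None /\ a = cp_neg c) \/
      (a = None /\ b = cp_neg c)
  end.

Definition single_fun (j : I) (a : pcar (P j)) : forall i, pcar (P i) :=
  fun i => match excluded_middle_informative (j = i) with
           | left e => eq_rect j (fun k => pcar (P k)) a i e
           | right _ => pone (P i)
           end.

Lemma fam_single_prop (j : I) (a : pcar (P j)) (ha : a <> pzero (P j)) :
  (forall i, single_fun j a i <> pzero (P i)) /\ finsupp (single_fun j a).
Proof.
  unfold single_fun; split.
  - intro i; destruct (excluded_middle_informative (j = i)) as [e|ne].
    + destruct e; exact ha.
    + exact (pa_one_neq0 (pax (P i))).
  - exists [j]; intros i hi.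
    destruct (excluded_middle_informative (j = i)) as [e|ne].
    + exfalso; apply hi; left; exact e.
    + reflexivity.
Qed.

Definition fam_single (j : I) (a : pcar (P j)) (ha : a <> pzero (P j)) : Fam :=
  exist _ (single_fun j a) (@fam_single_prop j a ha).

Definition incl (j : I) (a : pcar (P j)) : coprod :=
  match excluded_middle_informative (a = pzero (P j)) with
  | left _ => None
  | right ha => Some (class_of (@fam_single j a ha))
  end.

End Coprod.

(* Negation in a pasture is multiplication by -1, so coordinatewise products and
   sign changes commute with the even sign changes defining ~ and descend to
   classes; ~ is transitive because even sets of indices are closed under
   symmetric difference.  Changing the sign at j or at k gives equivalent
   families, so the involution does not depend on j0, and i_j commutes with it.
   Every remaining axiom holds coordinatewise, the nullset relation being checked
   at the single index where the three families may differ. *)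
From Stdlib Require Import List Arith Lia ClassicalEpsilon Classical
  FunctionalExtensionality PropExtensionality ProofIrrelevance Permutation.
Import ListNotations.
Set Implicit Arguments.

Section PastureFacts.
Variable Q : pasture.

Lemma pneg_as_mul (x : Q) : pneg Q x = pmul Q (pneg Q (pone Q)) x.
Proof.
  (* scale the relation 1 + (-1) + 0 = 0 by x *)
  pose proof (pax Q) as A.
  assert (N1 : pN Q (pone Q) (pneg Q (pone Q)) (pzero Q)).
  { apply (pa_N_zero A); rewrite (pa_negK A); reflexivity. }
  apply (pa_N_mul A x) in N1.
  rewrite (pa_mulC A x (pone Q)), (pa_mul1 A), (pa_mulC A x (pzero Q)), (pa_mul0 A) in N1.
  apply (pa_N_zero A) in N1.
  rewrite N1 at 1; rewrite (pa_negK A); apply (pa_mulC A).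
Qed.

Lemma pmul_neg_l (x y : Q) : pmul Q (pneg Q x) y = pneg Q (pmul Q x y).
Proof.
  rewrite (pneg_as_mul x), (pneg_as_mul (pmul Q x y)).
  symmetry; apply (pa_mulA (pax Q)).
Qed.

Lemma pmul_neg_r (x y : Q) : pmul Q x (pneg Q y) = pneg Q (pmul Q x y).
Proof.
  rewrite (pa_mulC (pax Q)), pmul_neg_l, (pa_mulC (pax Q)); reflexivity.
Qed.

Lemma pneg_neq0 (x : Q) : x <> pzero Q -> pneg Q x <> pzero Q.
Proof.
  intros hx e; apply hx.
  rewrite <- (pa_negK (pax Q) x), e; apply (pa_neg0 (pax Q)).
Qed.

Lemma pN_zero_cases (a b c : Q) :
  pN Q a b c -> a = pzero Q \/ b = pzero Q \/ c = pzero Q ->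
  (c = pzero Q /\ a = pneg Q b) \/ (b = pzero Q /\ a = pneg Q c) \/
  (a = pzero Q /\ b = pneg Q c).
Proof.
  pose proof (pax Q) as A.
  intros H [-> | [-> | ->]].
  - destruct (pa_N_perm A _ _ _ H) as (_ & _ & H' & _).
    right; right; split; [reflexivity|]; apply (pa_N_zero A); exact H'.
  - destruct (pa_N_perm A _ _ _ H) as (H' & _).
    right; left; split; [reflexivity|]; apply (pa_N_zero A); exact H'.
  - left; split; [reflexivity|]; apply (pa_N_zero A); exact H.
Qed.

End PastureFacts.

Lemma symdiff_even (A : Type) (l1 l2 : list A) :
  NoDup l1 -> NoDup l2 ->
  Nat.even (length l1) = true -> Nat.even (length l2) = true ->
  exists l3, NoDup l3 /\ Nat.even (length l3) = true /\
    forall a, In a l3 <-> ~ (In a l1 <-> In a l2).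
Proof.
  intros n1 n2 e1 e2.
  pose (inb (l : list A) (a : A) := if excluded_middle_informative (In a l) then true else false).
  assert (inb_spec : forall l a, inb l a = true <-> In a l).
  { intros l a; unfold inb; destruct excluded_middle_informative; split; easy. }
  assert (notinb_spec : forall l a, negb (inb l a) = true <-> ~ In a l).
  { intros l a; rewrite Bool.negb_true_iff, <- Bool.not_true_iff_false, inb_spec.
    reflexivity. }
  exists (filter (fun a => negb (inb l2 a)) l1 ++ filter (fun a => negb (inb l1 a)) l2).
  split; [|split].
  - apply NoDup_app; try apply NoDup_filter; auto.
    intros a h1 h2; apply filter_In in h1, h2.
    rewrite notinb_spec in h1; tauto.
  - (* both halves lose the elements common to l1 and l2, which are equally many *)
    assert (common : length (filter (inb l2) l1) = length (filter (inb l1) l2)).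
    { apply Permutation_length, NoDup_Permutation; try apply NoDup_filter; auto.
      intro a; rewrite !filter_In, !inb_spec; tauto. }
    pose proof (filter_length (inb l2) l1); pose proof (filter_length (inb l1) l2).
    rewrite length_app; apply Nat.even_spec; apply Nat.even_spec in e1, e2.
    destruct e1 as [m1 e1], e2 as [m2 e2].
    exists (m1 + m2 - length (filter (inb l2) l1)); lia.
  - intro a; rewrite in_app_iff, !filter_In, !notinb_spec; tauto.
Qed.

Section Classes.
Variable I : Type.
Variable P : I -> pasture.

Lemma fam_equiv_pointwise (x y : Fam P) :
  (forall i, proj1_sig x i = proj1_sig y i) -> fam_equiv x y.
Proof. intro h; exists nil; repeat split; auto using NoDup_nil; intros []. Qed.

Lemma fam_equiv_refl (x : Fam P) : fam_equiv x x.
Proof. apply fam_equiv_pointwise; reflexivity. Qed.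

Lemma fam_equiv_sym (x y : Fam P) : fam_equiv x y -> fam_equiv y x.
Proof.
  intros [l [n [e h]]]; exists l; repeat split; auto; intro hi; destruct (h i) as [h1 h2].
  - rewrite (h1 hi), (pa_negK (pax (P i))); reflexivity.
  - symmetry; auto.
Qed.

Lemma fam_equiv_trans (x y z : Fam P) : fam_equiv x y -> fam_equiv y z -> fam_equiv x z.
Proof.
  intros [l1 [n1 [e1 h1]]] [l2 [n2 [e2 h2]]].
  destruct (symdiff_even n1 n2 e1 e2) as [l3 [n3 [e3 h3]]].
  exists l3; repeat split; auto; intro hi; rewrite h3 in hi;
    destruct (h1 i) as [a1 b1], (h2 i) as [a2 b2];
    destruct (classic (In i l1)), (classic (In i l2)); try tauto.
  - rewrite a1, b2; auto.
  - rewrite b1, a2; auto.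
  - rewrite a1, a2, (pa_negK (pax (P i))); auto.
  - rewrite b1, b2; auto.
Qed.

Lemma fam_equiv_map (F : Fam P -> Fam P) (f : forall i, P i -> P i) :
  (forall x i, proj1_sig (F x) i = f i (proj1_sig x i)) ->
  (forall i a, f i (pneg (P i) a) = pneg (P i) (f i a)) ->
  forall x x', fam_equiv x x' -> fam_equiv (F x) (F x').
Proof.
  intros hF hf x x' [l [n [e h]]]; exists l; repeat split; auto;
    intro hi; destruct (h i) as [h1 h2]; rewrite !hF.
  - rewrite (h1 hi); apply hf.
  - rewrite (h2 hi); reflexivity.
Qed.

Lemma Cls_ext (C D : Cls P) : proj1_sig C = proj1_sig D -> C = D.
Proof.
  destruct C as [C pC], D as [D pD]; simpl; intros <-.
  f_equal; apply proof_irrelevance.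
Qed.

Lemma class_of_eq (x y : Fam P) : fam_equiv x y -> class_of x = class_of y.
Proof.
  intro h; apply Cls_ext; simpl.
  extensionality z; apply propositional_extensionality; unfold cls; split.
  - apply fam_equiv_trans; apply fam_equiv_sym; exact h.
  - apply fam_equiv_trans; exact h.
Qed.

Lemma class_of_pointwise (x y : Fam P) :
  (forall i, proj1_sig x i = proj1_sig y i) -> class_of x = class_of y.
Proof. intro h; apply class_of_eq, fam_equiv_pointwise, h. Qed.

Lemma class_of_mem (C : Cls P) (x : Fam P) : proj1_sig C x -> C = class_of x.
Proof.
  destruct C as [C [r ->]]; simpl; intro hx.
  change (class_of r = class_of x); apply class_of_eq, hx.
Qed.

Lemma class_of_inj (x y : Fam P) : class_of x = class_of y -> fam_equiv x y.
Proof.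
  intro e.
  change (proj1_sig (class_of x) y); rewrite e; apply fam_equiv_refl.
Qed.

Lemma class_of_repr (C : Cls P) : class_of (repr C) = C.
Proof.
  symmetry; apply class_of_mem.
  unfold repr; destruct constructive_indefinite_description as [r ->]; simpl.
  apply fam_equiv_refl.
Qed.

Lemma repr_class_of (x : Fam P) : fam_equiv (repr (class_of x)) x.
Proof. apply class_of_inj, class_of_repr. Qed.

Lemma coprod_cases (a : coprod P) : a = None \/ exists x, a = Some (class_of x).
Proof.
  destruct a as [C|]; [right|left; reflexivity].
  exists (repr C); rewrite class_of_repr; reflexivity.
Qed.

Lemma cp_mul_class (x y : Fam P) :
  cp_mul (Some (class_of x)) (Some (class_of y)) = Some (class_of (fam_mul x y)).
Proof.
  simpl; f_equal; apply class_of_eq.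
  apply fam_equiv_trans with (fam_mul x (repr (class_of y))).
  - apply (fam_equiv_map (fun z => fam_mul z (repr (class_of y)))
                          (fun i a => pmul (P i) a (proj1_sig (repr (class_of y)) i))).
    + reflexivity.
    + intros; apply pmul_neg_l.
    + apply repr_class_of.
  - apply (fam_equiv_map (fam_mul x) (fun i a => pmul (P i) (proj1_sig x i) a)).
    + reflexivity.
    + intros; apply pmul_neg_r.
    + apply repr_class_of.
Qed.

End Classes.

Section Coproduct.
Variable I : Type.
Variable P : I -> pasture.

Lemma fam_flip_at (j : I) (x : Fam P) (i : I) :
  proj1_sig (fam_flip j x) i =
  if excluded_middle_informative (j = i) then pneg (P i) (proj1_sig x i)
  else proj1_sig x i.
Proof. reflexivity. Qed.

(* The two flips differ by a sign change at the pair {j, k}. *)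
Lemma fam_flip_index (j k : I) (x : Fam P) : fam_equiv (fam_flip j x) (fam_flip k x).
Proof.
  destruct (classic (j = k)) as [<-|hjk]; [apply fam_equiv_refl|].
  exists [j; k]; split; [|split; [reflexivity|]].
  - constructor; [intros [h|[]]; congruence|].
    constructor; [intros []|constructor].
  - intro i; rewrite !fam_flip_at; split.
    + intros [<-|[<-|[]]];
        do 2 destruct excluded_middle_informative; try congruence.
      symmetry; apply (pa_negK (pax (P _))).
    + intro hi; do 2 destruct excluded_middle_informative;
        solve [reflexivity | exfalso; apply hi; subst; simpl; tauto].
Qed.

Variable j0 : I.

Lemma cp_neg_class (x : Fam P) :
  cp_neg j0 (Some (class_of x)) = Some (class_of (fam_flip j0 x)).
Proof.
  simpl; f_equal; apply class_of_eq.
  apply (fam_equiv_map (fam_flip j0)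
           (fun i a => if excluded_middle_informative (j0 = i) then pneg (P i) a else a)).
  - reflexivity.
  - intros i a; destruct excluded_middle_informative; reflexivity.
  - apply repr_class_of.
Qed.

Lemma cp_negK (a : coprod P) : cp_neg j0 (cp_neg j0 a) = a.
Proof.
  destruct (coprod_cases a) as [->|[x ->]]; [reflexivity|].
  rewrite !cp_neg_class; f_equal; apply class_of_pointwise; intro i.
  rewrite !fam_flip_at; destruct excluded_middle_informative; [|reflexivity].
  apply (pa_negK (pax (P i))).
Qed.

Lemma cp_mul_neg_r (d b : coprod P) : cp_mul d (cp_neg j0 b) = cp_neg j0 (cp_mul d b).
Proof.
  destruct (coprod_cases d) as [->|[x ->]], (coprod_cases b) as [->|[y ->]];
    try reflexivity.
  rewrite cp_neg_class, !cp_mul_class, cp_neg_class.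
  f_equal; apply class_of_pointwise; intro i; simpl; unfold flip_fun; simpl.
  destruct excluded_middle_informative; [apply pmul_neg_r|reflexivity].
Qed.

Lemma cp_mulA (a b c : coprod P) : cp_mul a (cp_mul b c) = cp_mul (cp_mul a b) c.
Proof.
  destruct (coprod_cases a) as [->|[x ->]], (coprod_cases b) as [->|[y ->]],
    (coprod_cases c) as [->|[z ->]]; try reflexivity.
  rewrite !cp_mul_class; f_equal; apply class_of_pointwise; intro i.
  apply (pa_mulA (pax (P i))).
Qed.

Lemma cp_mulC (a b : coprod P) : cp_mul a b = cp_mul b a.
Proof.
  destruct (coprod_cases a) as [->|[x ->]], (coprod_cases b) as [->|[y ->]];
    try reflexivity.
  rewrite !cp_mul_class; f_equal; apply class_of_pointwise; intro i.
  apply (pa_mulC (pax (P i))).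
Qed.

Lemma cp_mul1 (a : coprod P) : cp_mul (cp_one P) a = a.
Proof.
  destruct (coprod_cases a) as [->|[x ->]]; [reflexivity|].
  unfold cp_one; rewrite cp_mul_class; f_equal; apply class_of_pointwise; intro i.
  apply (pa_mul1 (pax (P i))).
Qed.

Definition fam_inv_fun (x : Fam P) (i : I) : P i :=
  proj1_sig (constructive_indefinite_description _
    (pa_inv (pax (P i)) (proj1 (proj2_sig x) i))).

Lemma fam_inv_fun_spec (x : Fam P) (i : I) :
  fam_inv_fun x i <> pzero (P i) /\
  pmul (P i) (proj1_sig x i) (fam_inv_fun x i) = pone (P i).
Proof. unfold fam_inv_fun; destruct constructive_indefinite_description as [y hy]; exact hy. Qed.

Lemma fam_inv_prop (x : Fam P) :
  (forall i, fam_inv_fun x i <> pzero (P i)) /\ finsupp P (fam_inv_fun x).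
Proof.
  split; [intro i; apply fam_inv_fun_spec|].
  destruct (proj2 (proj2_sig x)) as [l hl]; exists l; intros i hi.
  destruct (fam_inv_fun_spec x i) as [_ e].
  rewrite (hl i hi), (pa_mul1 (pax (P i))) in e; exact e.
Qed.

Definition fam_inv (x : Fam P) : Fam P := exist _ (fam_inv_fun x) (fam_inv_prop x).

Lemma cp_inv (a : coprod P) : a <> cp_zero P -> exists b, b <> cp_zero P /\ cp_mul a b = cp_one P.
Proof.
  destruct (coprod_cases a) as [->|[x ->]]; [contradiction|intros _].
  exists (Some (class_of (fam_inv x))); split; [discriminate|].
  unfold cp_one; rewrite cp_mul_class; f_equal; apply class_of_pointwise; intro i.
  apply fam_inv_fun_spec.
Qed.

Definition fam_null (x y z : Fam P) : Prop :=
  exists j, pN (P j) (proj1_sig x j) (proj1_sig y j) (proj1_sig z j) /\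
    forall i, i <> j -> proj1_sig x i = proj1_sig y i /\ proj1_sig y i = proj1_sig z i.

Lemma fam_null_swap12 (x y z : Fam P) : fam_null x y z -> fam_null y x z.
Proof.
  intros [j [hN ho]]; exists j; split.
  - apply (pa_N_perm (pax (P j)) _ _ _ hN).
  - intros i hi; destruct (ho i hi); split; congruence.
Qed.

Lemma fam_null_swap23 (x y z : Fam P) : fam_null x y z -> fam_null x z y.
Proof.
  intros [j [hN ho]]; exists j; split.
  - apply (pa_N_perm (pax (P j)) _ _ _ hN).
  - intros i hi; destruct (ho i hi); split; congruence.
Qed.

Lemma fam_null_mul (w x y z : Fam P) :
  fam_null x y z -> fam_null (fam_mul w x) (fam_mul w y) (fam_mul w z).
Proof.
  intros [j [hN ho]]; exists j; split.
  - apply (pa_N_mul (pax (P j)) _ _ _ _ hN).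
  - intros i hi; destruct (ho i hi) as [e1 e2]; simpl; rewrite e1, e2; split; reflexivity.
Qed.

Lemma cp_N_Some (A B C : Cls P) :
  cp_N j0 (Some A) (Some B) (Some C) <->
  exists x y z, proj1_sig A x /\ proj1_sig B y /\ proj1_sig C z /\ fam_null x y z.
Proof.
  simpl; unfold fam_null; split.
  - intros (x & y & z & j & hx & hy & hz & h); exists x, y, z; repeat split; eauto.
  - intros (x & y & z & hx & hy & hz & j & h); exists x, y, z, j; tauto.
Qed.

Lemma cp_N_mixed (a b c : coprod P) : a = None \/ b = None \/ c = None ->
  (cp_N j0 a b c <->
   (c = None /\ a = cp_neg j0 b) \/ (b = None /\ a = cp_neg j0 c) \/
   (a = None /\ b = cp_neg j0 c)).
Proof.
  intro h; destruct a, b, c; try (exfalso; intuition discriminate); reflexivity.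
Qed.

Lemma cp_N_swap12 (a b c : coprod P) : cp_N j0 a b c -> cp_N j0 b a c.
Proof.
  destruct (classic (a = None \/ b = None \/ c = None)) as [hz|hnz].
  - rewrite !cp_N_mixed by tauto.
    intros [[-> ->]|[[-> ->]|[-> ->]]]; rewrite ?cp_negK; tauto.
  - destruct a as [A|], b as [B|], c as [C|]; try tauto.
    rewrite !cp_N_Some; intros (x & y & z & hx & hy & hz & h).
    exists y, x, z; auto using fam_null_swap12.
Qed.

Lemma cp_N_swap23 (a b c : coprod P) : cp_N j0 a b c -> cp_N j0 a c b.
Proof.
  destruct (classic (a = None \/ b = None \/ c = None)) as [hz|hnz].
  - rewrite !cp_N_mixed by tauto.
    intros [[-> ->]|[[-> ->]|[-> ->]]]; rewrite ?cp_negK; tauto.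
  - destruct a as [A|], b as [B|], c as [C|]; try tauto.
    rewrite !cp_N_Some; intros (x & y & z & hx & hy & hz & h).
    exists x, z, y; auto using fam_null_swap23.
Qed.

Lemma cp_N_perm (a b c : coprod P) : cp_N j0 a b c ->
  cp_N j0 a c b /\ cp_N j0 b a c /\ cp_N j0 b c a /\ cp_N j0 c a b /\ cp_N j0 c b a.
Proof.
  intro h; repeat split; auto using cp_N_swap12, cp_N_swap23.
Qed.

Lemma cp_N_mul (d a b c : coprod P) :
  cp_N j0 a b c -> cp_N j0 (cp_mul d a) (cp_mul d b) (cp_mul d c).
Proof.
  destruct (classic (a = None \/ b = None \/ c = None)) as [hz|hnz].
  - assert (hmul0 : cp_mul d None = None) by (destruct d; reflexivity).
    rewrite !cp_N_mixed by (destruct hz as [-> | [-> | ->]]; auto).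
    intros [[-> ->]|[[-> ->]|[-> ->]]]; rewrite ?cp_mul_neg_r, ?hmul0; tauto.
  - destruct a as [A|], b as [B|], c as [C|]; try tauto.
    destruct (coprod_cases d) as [->|[w ->]]; [left; split; reflexivity|].
    rewrite cp_N_Some; intros (x & y & z & hx & hy & hz & h).
    rewrite (class_of_mem _ _ hx), (class_of_mem _ _ hy), (class_of_mem _ _ hz),
      !cp_mul_class, cp_N_Some.
    exists (fam_mul w x), (fam_mul w y), (fam_mul w z).
    repeat split; try apply fam_equiv_refl; apply fam_null_mul, h.
Qed.

Lemma cp_N_zero (a b : coprod P) : cp_N j0 a b None <-> a = cp_neg j0 b.
Proof.
  rewrite cp_N_mixed by tauto; intuition (subst; reflexivity).
Qed.

Lemma coprod_pasture_axioms :
  pasture_axioms (cp_zero P) (cp_one P) (@cp_mul I P) (cp_neg j0) (cp_N j0).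
Proof.
  constructor.
  - exact cp_mulA.
  - exact cp_mulC.
  - exact cp_mul1.
  - reflexivity.
  - discriminate.
  - unfold cp_zero; intros [] []; simpl; congruence.
  - exact cp_inv.
  - exact cp_negK.
  - reflexivity.
  - exact cp_N_perm.
  - exact cp_N_mul.
  - exact cp_N_zero.
Qed.

End Coproduct.

Section Inclusion.
Variable I : Type.
Variable P : I -> pasture.
Variable j0 : I.

Lemma single_fun_at (j : I) (a : P j) : single_fun P j a j = a.
Proof.
  unfold single_fun; destruct excluded_middle_informative as [e|n]; [|contradiction].
  rewrite (proof_irrelevance _ e eq_refl); reflexivity.
Qed.

Lemma single_fun_off (j : I) (a : P j) (i : I) : j <> i -> single_fun P j a i = pone (P i).
Proof.
  intro h; unfold single_fun; destruct excluded_middle_informative; [contradiction|reflexivity].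
Qed.

Lemma incl_zero (j : I) : incl P j (pzero (P j)) = None.
Proof. unfold incl; destruct excluded_middle_informative; [reflexivity|contradiction]. Qed.

Lemma incl_nz (j : I) (a : P j) (ha : a <> pzero (P j)) :
  incl P j a = Some (class_of (fam_single P j ha)).
Proof.
  unfold incl; destruct excluded_middle_informative; [contradiction|].
  f_equal; apply class_of_pointwise; reflexivity.
Qed.

Lemma incl_mul (j : I) (a b : P j) : incl P j (pmul (P j) a b) = cp_mul (incl P j a) (incl P j b).
Proof.
  pose proof (pax (P j)) as A.
  destruct (classic (a = pzero (P j))) as [->|ha].
  { rewrite (pa_mul0 A), incl_zero; reflexivity. }
  destruct (classic (b = pzero (P j))) as [->|hb].
  { rewrite (pa_mulC A), (pa_mul0 A), incl_zero, (cp_mulC (incl P j a)); reflexivity. }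
  rewrite (incl_nz _ (pa_mul_neq0 A ha hb)), (incl_nz _ ha), (incl_nz _ hb), cp_mul_class.
  f_equal; apply class_of_pointwise; intro i; simpl.
  destruct (classic (j = i)) as [<-|hi].
  - rewrite !single_fun_at; reflexivity.
  - rewrite !single_fun_off by exact hi; symmetry; apply (pa_mul1 (pax (P i))).
Qed.

Lemma incl_one (j : I) : incl P j (pone (P j)) = cp_one P.
Proof.
  rewrite (incl_nz _ (pa_one_neq0 (pax (P j)))); unfold cp_one.
  f_equal; apply class_of_pointwise; intro i; simpl.
  destruct (classic (j = i)) as [<-|hi].
  - apply single_fun_at.
  - apply single_fun_off, hi.
Qed.

Lemma incl_neg (j : I) (a : P j) : incl P j (pneg (P j) a) = cp_neg j0 (incl P j a).
Proof.
  destruct (classic (a = pzero (P j))) as [->|ha].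
  { rewrite (pa_neg0 (pax (P j))), incl_zero; reflexivity. }
  rewrite (incl_nz _ (pneg_neq0 _ ha)), (incl_nz _ ha), cp_neg_class.
  f_equal; apply class_of_eq.
  apply fam_equiv_trans with (fam_flip j (fam_single P j ha)); [|apply fam_flip_index].
  apply fam_equiv_pointwise; intro i; simpl; unfold flip_fun; simpl.
  destruct excluded_middle_informative as [<-|hi].
  - rewrite !single_fun_at; reflexivity.
  - rewrite !single_fun_off by exact hi; reflexivity.
Qed.

Lemma incl_N (j : I) (a b c : P j) :
  pN (P j) a b c -> cp_N j0 (incl P j a) (incl P j b) (incl P j c).
Proof.
  intro H.
  destruct (classic (a = pzero (P j) \/ b = pzero (P j) \/ c = pzero (P j))) as [hz|hnz].
  - rewrite cp_N_mixed by (destruct hz as [-> | [-> | ->]]; rewrite incl_zero; tauto).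
    destruct (pN_zero_cases _ H hz) as [[-> ->]|[[-> ->]|[-> ->]]];
      rewrite incl_zero, incl_neg; tauto.
  - assert (ha : a <> pzero (P j)) by tauto.
    assert (hb : b <> pzero (P j)) by tauto.
    assert (hc : c <> pzero (P j)) by tauto.
    rewrite (incl_nz _ ha), (incl_nz _ hb), (incl_nz _ hc), cp_N_Some.
    exists (fam_single P j ha), (fam_single P j hb), (fam_single P j hc).
    repeat split; try apply fam_equiv_refl.
    exists j; split.
    + simpl; rewrite !single_fun_at; exact H.
    + intros i hi; simpl; rewrite !single_fun_off by congruence; split; reflexivity.
Qed.

End Inclusion.

Theorem lemma7p3 (I : Type) (P : I -> pasture) (j0 : I) :
  pasture_axioms (@cp_zero I P) (@cp_one I P) (@cp_mul I P)
                 (@cp_neg I P j0) (@cp_N I P j0) /\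
  forall j : I,
    morphism_axioms (pzero (P j)) (pone (P j)) (@pmul (P j)) (@pneg (P j)) (@pN (P j))
                    (@cp_zero I P) (@cp_one I P) (@cp_mul I P)
                    (@cp_neg I P j0) (@cp_N I P j0)
                    (@incl I P j).
Proof.
  split; [apply coprod_pasture_axioms|intro j].
  split; [apply incl_mul|split; [apply incl_zero|split; [apply incl_one|split]]].
  - apply incl_neg.
  - apply incl_N.
Qed.
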